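(* Let $m\ge2$ and let $\mathcal{P}^{OC}_m$ be the set of partial matchings $\pi$ of $[m]$ (set partitions of $[m]$ with all blocks of size at most $2$) having at least one arc, such that every opener of $\pi$ is smaller than every closer of $\pi$, $1$ is an opener and $m$ is a closer (fixed points may occur anywhere strictly between $1$ and $m$). For $\pi\in\mathcal{P}^{OC}_m$ let $c_1<c_2<\dots<c_r$ be the closers of $\pi$, let $\rho_\pi(c_i)=c_{r+1-i}$ and $\rho_\pi(x)=x$ for every other $x\in[m]$, and define $\Phi(\pi)$ to be the partial matching with arcs $\{(a,\rho_\pi(b)):(a,b)\text{ an arc of }\pi\}$ and the same fixed points as $\pi$. Then $\Phi$ is an involution on $\mathcal{P}^{OC}_m$ and for every $t\ge2$, $$\mathrm{ne}_t(\Phi(\pi))=\mathrm{cr}_t(\pi),\qquad \mathrm{cr}_t(\Phi(\pi))=\mathrm{ne}_t(\pi).$$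
   Context: A partial matching of $[m]=\{1,\dots,m\}$ is a set partition of $[m]$ all of whose blocks have size $1$ or $2$. A block $\{i,j\}$ with $i<j$ is written as the arc $(i,j)$; $i$ is called an opener and $j$ a closer. A singleton block $\{i\}$ is called a fixed point. For $t\ge 2$, a $t$-crossing is a set of $t$ arcs $(i_1,j_1),\dots,(i_t,j_t)$ with $i_1<i_2<\dots<i_t<j_1<j_2<\dots<j_t$, and a $t$-nesting is a set of $t$ arcs with $i_1<i_2<\dots<i_t<j_t<j_{t-1}<\dots<j_1$. For a partial matching $\pi$ and $t\ge2$, $\mathrm{cr}_t(\pi)$ and $\mathrm{ne}_t(\pi)$ denote the number of $t$-crossings and of $t$-nestings of $\pi$. *)

(* Ground set [m] = {1,...,m} is modelled by 'I_m = {0,...,m-1}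
   (element k+1 of [m] <-> ordinal k); order is preserved. *)
From mathcomp Require Import all_boot.
Set Implicit Arguments. Unset Strict Implicit. Unset Printing Implicit Defensive.

Section PM.
Variable m : nat.
Implicit Types (pi : {set {set 'I_m}}) (x y : 'I_m).

Definition is_partial_matching pi : bool :=
  partition pi [set: 'I_m] && [forall B in pi, #|B| <= 2].

Definition is_arc pi x y : bool := (x < y) && ([set x; y] \in pi).
Definition is_opener pi x : bool := [exists y, is_arc pi x y].
Definition is_closer pi y : bool := [exists x, is_arc pi x y].
Definition is_fixed_point pi x : bool := [set x] \in pi.

Definition in_POC pi : bool :=
  [&& is_partial_matching pi,
      [exists x, exists y, is_arc pi x y],
      [forall x, forall y, (is_opener pi x && is_closer pi y) ==> (x < y)],
      [exists x, (val x == 0) && is_opener pi x]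
    & [exists y, (val y == m.-1) && is_closer pi y]].

Definition closers pi : seq 'I_m := [seq y <- enum 'I_m | is_closer pi y].

(* rho_pi(c_i) = c_{r+1-i}, identity elsewhere *)
Definition rho pi x : 'I_m :=
  let c := closers pi in
  if x \in c then nth x c ((size c).-1 - index x c) else x.

Definition Phi pi : {set {set 'I_m}} :=
  [set [set p.1; rho pi p.2] | p in [set p : 'I_m * 'I_m | is_arc pi p.1 p.2]]
  :|: [set [set x] | x in [set x | is_fixed_point pi x]].

(* number of t-crossings: t-tuples of arcs (i_1,j_1),...,(i_t,j_t) with
   i_1 < ... < i_t < j_1 < ... < j_t  (each t-set of arcs with this pattern
   has exactly one such enumeration) *)
Definition cr (t : nat) pi : nat :=
  #|[set f : {ffun 'I_t -> 'I_m * 'I_m} |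
      [forall k, is_arc pi (f k).1 (f k).2] &&
      [forall k, forall l,
         ((f k).1 < (f l).2) &&
         ((k < l) ==> (((f k).1 < (f l).1) && ((f k).2 < (f l).2)))]]|.

Definition ne (t : nat) pi : nat :=
  #|[set f : {ffun 'I_t -> 'I_m * 'I_m} |
      [forall k, is_arc pi (f k).1 (f k).2] &&
      [forall k, forall l,
         ((f k).1 < (f l).2) &&
         ((k < l) ==> (((f k).1 < (f l).1) && ((f l).2 < (f k).2)))]]|.

End PM.

From mathcomp Require Import all_boot zify.
Set Implicit Arguments. Unset Strict Implicit. Unset Printing Implicit Defensive.

(* Write c_1 < ... < c_r for the closers of pi.  The map
   rho_pi is the "mirror" of the sequence (c_1, ..., c_r): it reverses this
   sequence and fixes all other points.  Hence it is an involution of [m]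
   which reverses the order of the closers.

   For pi in P^OC_m, every block of pi is a fixed point {x} or an arc {a, b}
   whose opener a is not a closer, so Phi(pi) is simply the image of the
   blocks of pi under the bijection rho_pi.  Consequently Phi(pi) is again a
   partial matching with the same openers and closers, its arcs are exactly
   the pairs (a, rho_pi b) with (a, b) an arc of pi, and rho_(Phi pi) = rho_pi,
   which gives Phi (Phi pi) = pi.

   Finally, replacing every arc (a, b) of a t-family by (a, rho_pi b) is a
   bijection between t-families of arcs of Phi(pi) and of pi.  Since every
   opener precedes every closer, only the relative order of the closers
   matters in the crossing/nesting patterns, and rho_pi reverses it: the
   bijection exchanges t-nestings and t-crossings. *)

Section Mirror.
Variables (T : eqType) (s : seq T).

Definition mirror (x : T) : T :=
  if x \in s then nth x s ((size s).-1 - index x s) else x.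

Lemma mirror_out x : x \notin s -> mirror x = x.
Proof. by rewrite /mirror => /negbTE ->. Qed.

Lemma mirror_index_in x (i := (size s).-1 - index x s) :
  x \in s -> i < size s /\ mirror x = nth x s i.
Proof.
move=> xs; rewrite /mirror xs; split=> //.
by move: xs; rewrite -index_mem /i; lia.
Qed.

Lemma mirror_mem x : (mirror x \in s) = (x \in s).
Proof.
case xs: (x \in s); last by rewrite mirror_out ?xs.
by have [lt_i ->] := mirror_index_in xs; rewrite mem_nth.
Qed.

Hypothesis s_uniq : uniq s.

Lemma mirrorK : involutive mirror.
Proof.
move=> x; case xs: (x \in s); last by rewrite !mirror_out ?xs.
have [lt_i ->] := mirror_index_in xs.
have ys : nth x s ((size s).-1 - index x s) \in s by rewrite mem_nth.
have [_ ->] := mirror_index_in ys; rewrite index_uniq // subKn.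
  by rewrite (set_nth_default x) ?nth_index // index_mem.
by move: xs; rewrite -index_mem; lia.
Qed.

End Mirror.

Section MirrorOrder.
Variables (T : eqType) (lt : rel T).
Hypotheses (lt_trans : transitive lt) (lt_irr : irreflexive lt).
Variable s : seq T.
Hypothesis s_sorted : sorted lt s.

Let s_uniq : uniq s. Proof. exact: sorted_uniq s_sorted. Qed.

Lemma index_sorted_lt x y : x \in s -> y \in s -> lt x y ->
  index x s < index y s.
Proof.
move=> xs ys lt_xy; case: ltngtP => // [lt_yx | eq_xy].
  have := sorted_ltn_index lt_trans s_sorted y x ys xs lt_yx.
  by move/(lt_trans lt_xy); rewrite lt_irr.
by move: lt_xy; rewrite -(nth_index x xs) eq_xy nth_index // lt_irr.
Qed.

Lemma mirror_lt_rev x y : x \in s -> y \in s -> lt x y ->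
  lt (mirror s y) (mirror s x).
Proof.
move=> xs ys lt_xy; have lt_ixy := index_sorted_lt xs ys lt_xy.
have [lt_iy ->] := mirror_index_in ys; have [lt_ix ->] := mirror_index_in xs.
rewrite (set_nth_default x y lt_iy).
apply: (sorted_ltn_nth lt_trans x s_sorted); rewrite ?inE //.
by move: lt_ixy lt_ix; rewrite -index_mem in ys; lia.
Qed.

Lemma mirror_lt x y : x \in s -> y \in s ->
  lt (mirror s y) (mirror s x) = lt x y.
Proof.
move=> xs ys; apply/idP/idP; last exact: mirror_lt_rev.
move/mirror_lt_rev; rewrite !mirror_mem !(mirrorK s_uniq); exact.
Qed.

End MirrorOrder.

Section Closers.
Variables (m : nat) (pi : {set {set 'I_m}}).

Lemma mem_closers y : (y \in closers pi) = is_closer pi y.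
Proof. by rewrite /closers mem_filter mem_enum andbT. Qed.

Lemma ord_ltn_trans : transitive (fun x y : 'I_m => x < y).
Proof. by move=> y x z; apply: ltn_trans. Qed.

Lemma ord_ltn_irr : irreflexive (fun x y : 'I_m => x < y).
Proof. by move=> x; apply: ltnn. Qed.

Lemma closers_sorted : sorted (fun x y : 'I_m => x < y) (closers pi).
Proof.
rewrite /closers; apply: sorted_filter; first exact: ord_ltn_trans.
by have := iota_ltn_sorted 0 m; rewrite -val_enum_ord sorted_map.
Qed.

Lemma rhoE : rho pi = mirror (closers pi).
Proof. by []. Qed.

Lemma rhoK : involutive (rho pi).
Proof.
rewrite rhoE; apply: mirrorK.
exact: (sorted_uniq ord_ltn_trans ord_ltn_irr closers_sorted).
Qed.

Lemma rho_inj : injective (rho pi).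
Proof. exact: inv_inj rhoK. Qed.

Lemma closer_rho y : is_closer pi (rho pi y) = is_closer pi y.
Proof. by rewrite -!mem_closers rhoE mirror_mem. Qed.

Lemma rho_lt x y : is_closer pi x -> is_closer pi y ->
  (rho pi y < rho pi x) = (x < y).
Proof.
rewrite -!mem_closers rhoE.
exact: (mirror_lt ord_ltn_trans ord_ltn_irr closers_sorted).
Qed.

Lemma rho_noncloser x : ~~ is_closer pi x -> rho pi x = x.
Proof. by rewrite -mem_closers rhoE; apply: mirror_out. Qed.

Lemma imset_rhoK (B : {set 'I_m}) : rho pi @: (rho pi @: B) = B.
Proof. by rewrite -imset_comp (eq_imset _ rhoK) imset_id. Qed.

Lemma imset_rho_setT : rho pi @: [set: 'I_m] = [set: 'I_m].
Proof. by apply/setP => x; rewrite inE -[x]rhoK imset_f. Qed.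

End Closers.

Lemma imset_pair (T T' : finType) (f : T -> T') a b :
  f @: [set a; b] = [set f a; f b].
Proof. by rewrite imsetU1 imset_set1. Qed.

Section PhiStructure.
Variables (m : nat) (pi : {set {set 'I_m}}).
Hypothesis pi_POC : in_POC pi.
Local Notation r := (rho pi).

Lemma POC_partition : partition pi [set: 'I_m].
Proof. by case/and5P: pi_POC => /andP[]. Qed.

Lemma POC_block_size B : B \in pi -> #|B| <= 2.
Proof. by case/and5P: pi_POC => /andP[_ /forallP/(_ B)/implyP]. Qed.

Lemma opener_lt_closer x y : is_opener pi x -> is_closer pi y -> x < y.
Proof.
case/and5P: pi_POC => _ _ /forallP op_cl _ _ ox cy.
by have /forallP/(_ y) := op_cl x; rewrite ox cy.
Qed.

Lemma arc_opener a b : is_arc pi a b -> is_opener pi a.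
Proof. by move=> ab; apply/existsP; exists b. Qed.

Lemma arc_closer a b : is_arc pi a b -> is_closer pi b.
Proof. by move=> ab; apply/existsP; exists a. Qed.

Lemma opener_noncloser x : is_opener pi x -> ~~ is_closer pi x.
Proof. by move=> ox; apply/negP => /(opener_lt_closer ox); rewrite ltnn. Qed.

Lemma fixed_noncloser x : is_fixed_point pi x -> ~~ is_closer pi x.
Proof.
move=> fx; apply/negP => /existsP[a /andP[lt_ax ax]].
have tI := partition_trivIset POC_partition.
have e : [set a; x] = [set x].
  rewrite -(def_pblock tI ax (setU1r _ (set11 x))).
  exact: def_pblock tI fx (set11 x).
have : a \in [set x] by rewrite -e setU11.
by rewrite inE => /eqP eax; rewrite eax ltnn in lt_ax.
Qed.

Lemma block_cases B : B \in pi ->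
  (exists2 x, B = [set x] & is_fixed_point pi x) \/
  (exists a b, B = [set a; b] /\ is_arc pi a b).
Proof.
move=> piB; have B_le2 := POC_block_size piB.
have : 0 < #|B| by rewrite card_gt0 (partition_neq0 POC_partition piB).
have [/eqP/cards1P[x eB] _ | B_ne1 B_gt0] := eqVneq #|B| 1.
  by left; exists x; rewrite /is_fixed_point -?eB.
have /cards2P[x [y [xy eB]]] : #|B| == 2 by apply/eqP; lia.
right; have [lt_xy | lt_yx | eq_xy] := ltngtP x y.
- by exists x, y; rewrite /is_arc lt_xy -eB piB.
- by exists y, x; rewrite /is_arc lt_yx setUC -eB piB.
- by move/eqP: xy; case; apply: val_inj.
Qed.

Lemma PhiE : Phi pi = [set r @: (B : {set 'I_m}) | B in pi].
Proof.
apply/setP => B'; apply/idP/imsetP.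
- case/setUP => /imsetP[p]; rewrite inE => hp ->.
  + exists [set p.1; p.2]; first by case/andP: hp.
    by rewrite imset_pair (rho_noncloser (opener_noncloser (arc_opener hp))).
  + exists [set p]; rewrite // imset_set1.
    by rewrite (rho_noncloser (fixed_noncloser hp)).
- move=> [B piB ->]; apply/setUP.
  case: (block_cases piB) => [[x -> fx] | [a [b [-> ab]]]].
  + rewrite imset_set1 (rho_noncloser (fixed_noncloser fx)); right.
    by apply/imsetP; exists x; rewrite ?inE.
  + rewrite imset_pair (rho_noncloser (opener_noncloser (arc_opener ab))); left.
    by apply/imsetP; exists (a, b); rewrite ?inE.
Qed.

Lemma mem_Phi (B : {set 'I_m}) : (B \in Phi pi) = (r @: B \in pi).
Proof.
rewrite PhiE; apply/imsetP/idP => [[B0 piB0 ->] | piB].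
  by rewrite imset_rhoK.
by exists (r @: B); rewrite ?imset_rhoK.
Qed.

Lemma arc_Phi x y : is_arc (Phi pi) x y = is_arc pi x (r y).
Proof.
apply/idP/idP => [/andP[lt_xy] | xry].
- rewrite mem_Phi imset_pair => pi_rxy.
  have [lt_r | lt_r | eq_r] := ltngtP (r x) (r y).
  + have rxy : is_arc pi (r x) (r y) by rewrite /is_arc lt_r pi_rxy.
    have nx : ~~ is_closer pi x.
      by rewrite -closer_rho opener_noncloser // (arc_opener rxy).
    by move: rxy; rewrite (rho_noncloser nx).
  + have ryx : is_arc pi (r y) (r x) by rewrite /is_arc lt_r setUC pi_rxy.
    have ny : ~~ is_closer pi y.
      by rewrite -closer_rho opener_noncloser // (arc_opener ryx).
    have cx : is_closer pi x by rewrite -closer_rho (arc_closer ryx).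
    move: (opener_lt_closer (arc_opener ryx) cx); rewrite (rho_noncloser ny).
    by rewrite ltnNge ltnW.
  + by have eq_xy := rho_inj (val_inj eq_r); rewrite eq_xy ltnn in lt_xy.
- have ox := arc_opener xry.
  have cy : is_closer pi y by rewrite -closer_rho (arc_closer xry).
  rewrite /is_arc (opener_lt_closer ox cy) mem_Phi imset_pair.
  by rewrite (rho_noncloser (opener_noncloser ox)); case/andP: xry.
Qed.

Lemma closer_Phi y : is_closer (Phi pi) y = is_closer pi y.
Proof.
rewrite -(closer_rho pi y); apply/existsP/existsP => [[x] | [x xry]].
- by rewrite arc_Phi; exists x.
- by exists x; rewrite arc_Phi.
Qed.

Lemma opener_Phi x : is_opener (Phi pi) x = is_opener pi x.
Proof.
apply/existsP/existsP => [[y] | [y xy]].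
- by rewrite arc_Phi; exists (r y).
- by exists (r y); rewrite arc_Phi rhoK.
Qed.

(* Phi pi has the same closers as pi, hence the same mirror map. *)
Lemma rho_Phi : rho (Phi pi) = r.
Proof. by rewrite !rhoE /closers (eq_filter closer_Phi). Qed.

Lemma POC_Phi : in_POC (Phi pi).
Proof.
case/and5P: pi_POC => _ /existsP[a /existsP[b ab]] _
  /existsP[x0 /andP[x00 ox0]] /existsP[y0 /andP[y0m cy0]].
apply/and5P; split.
- apply/andP; split.
    rewrite PhiE -(imset_rho_setT pi) imset_partition ?POC_partition //.
    exact: rho_inj.
  apply/forallP => B; apply/implyP; rewrite PhiE => /imsetP[B0 piB0 ->].
  by rewrite card_imset ?POC_block_size //; apply: rho_inj.
- by apply/existsP; exists a; apply/existsP; exists (r b); rewrite arc_Phi rhoK.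
- apply/forallP => x; apply/forallP => y; rewrite opener_Phi closer_Phi.
  by apply/implyP => /andP[]; apply: opener_lt_closer.
- by apply/existsP; exists x0; rewrite x00 opener_Phi.
- by apply/existsP; exists y0; rewrite y0m closer_Phi.
Qed.

End PhiStructure.

Lemma PhiK m (pi : {set {set 'I_m}}) : in_POC pi -> Phi (Phi pi) = pi.
Proof.
move=> piP; apply/setP => B.
by rewrite (mem_Phi (POC_Phi piP)) (rho_Phi piP) (mem_Phi piP) imset_rhoK.
Qed.

Section CrossingsNestings.
Variables (m : nat) (pi : {set {set 'I_m}}) (t : nat).
Hypothesis pi_POC : in_POC pi.
Local Notation r := (rho pi).
Local Notation family := {ffun 'I_t -> 'I_m * 'I_m}.

Definition relabel (h : family) : family := [ffun k => ((h k).1, r (h k).2)].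

Lemma relabelK : involutive relabel.
Proof. by move=> h; apply/ffunP => k; rewrite !ffunE /= rhoK; case: (h k). Qed.

Lemma card_relabel (P Q : pred family) : (forall h, P h = Q (relabel h)) ->
  #|[set h | P h]| = #|[set h | Q h]|.
Proof.
move=> PQ; rewrite -[RHS](card_preimset _ (inv_inj relabelK)).
by apply: eq_card => h; rewrite !inE PQ.
Qed.

Lemma arcs_relabel (h : family) :
  [forall k, is_arc (Phi pi) (h k).1 (h k).2] =
  [forall k, is_arc pi (relabel h k).1 (relabel h k).2].
Proof. by apply: eq_forallb => k; rewrite arc_Phi // ffunE. Qed.

Lemma relabel_arcs_facts (h : family) :
  [forall k, is_arc pi (relabel h k).1 (relabel h k).2] ->
  forall k l,
    [/\ (h k).1 < (h l).2, (h k).1 < r (h l).2 & is_closer pi (h k).2].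
Proof.
move=> /forallP arcs k l; have := arcs k; have := arcs l; rewrite !ffunE /=.
move=> arc_l arc_k; have op_k := arc_opener arc_k.
have cl_l : is_closer pi (h l).2 by rewrite -closer_rho (arc_closer arc_l).
split; first exact: opener_lt_closer op_k cl_l.
  exact: opener_lt_closer op_k (arc_closer arc_l).
by rewrite -closer_rho (arc_closer arc_k).
Qed.

Lemma ne_Phi : ne t (Phi pi) = cr t pi.
Proof.
apply: card_relabel => h; rewrite arcs_relabel.
case arcs: [forall k, _] => //=; have facts := relabel_arcs_facts arcs.
apply: eq_forallb => k; apply: eq_forallb => l; rewrite !ffunE /=.
have [-> -> cl_k] := facts k l; have [_ _ cl_l] := facts l k.
by rewrite rho_lt.
Qed.

Lemma cr_Phi : cr t (Phi pi) = ne t pi.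
Proof.
apply: card_relabel => h; rewrite arcs_relabel.
case arcs: [forall k, _] => //=; have facts := relabel_arcs_facts arcs.
apply: eq_forallb => k; apply: eq_forallb => l; rewrite !ffunE /=.
have [-> -> cl_k] := facts k l; have [_ _ cl_l] := facts l k.
by rewrite rho_lt.
Qed.

End CrossingsNestings.

Theorem mainTheorem3 (m : nat) (hm : 2 <= m) (pi : {set {set 'I_m}}) :
  in_POC pi ->
  [/\ in_POC (Phi pi), Phi (Phi pi) = pi &
      forall t : nat, 2 <= t -> ne t (Phi pi) = cr t pi /\ cr t (Phi pi) = ne t pi].
Proof.
move=> piP; split; [exact: POC_Phi | exact: PhiK |].
by move=> t _; split; [exact: ne_Phi | exact: cr_Phi].
Qed.
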